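(* Let $\ell>0$, let $F$ be a smooth closed front wheel trajectory, and suppose there is a closed rear wheel trajectory $R$ of the bicycle of length $\ell$ with signed length $L$. Then the bicycle monodromy $M_F$ is parabolic if and only if $L=0$.
   Context: Bicycle model: a segment $RF$ of fixed length $\ell$ moves in the plane ($F$ = front wheel, $R$ = rear wheel) subject to the constraint that the velocity of $R$ is always parallel to $RF$. For a closed front path, the bicycle monodromy $M_F$ is the self-map of the circle of radius $\ell$ sending the initial position of $R$ relative to $F$ to its terminal position; it is a Möbius transformation, called hyperbolic if it has two fixed points, parabolic if it has exactly one fixed point, elliptic if none. A closed rear track corresponds to a fixed point of $M_F$. The signed length of the rear track is the alternating sum of the lengths of its smooth pieces, the sign changing at each cusp; equivalently $\int\cos\alpha\,dt$ where $t$ is arc length on $F$ and $\alpha=\arg F'-\arg\overrightarrow{RF}$ is the steering angle. *)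

From Stdlib Require Import Reals ZArith.
From Coquelicot Require Import Coquelicot.
Open Scope R_scope.

(* The rear wheel is
   R(t) = F(t) - ell * (cos th(t), sin th(t)), i.e. th(t) is the angle of the
   vector RF (position of R relative to F is the point -ell*(cos th, sin th)
   of the circle of radius ell, parametrized by th mod 2*pi). *)

Definition smooth (f : R -> R) : Prop :=
  forall (n : nat) (x : R), ex_derive (Derive_n f n) x.

Definition periodic (f : R -> R) (T : R) : Prop :=
  forall t, f (t + T) = f t.

(* The no-skid constraint "R' is parallel to RF", written for the angle th:
   R' = F' - ell*th'*(-sin th, cos th) is parallel to (cos th, sin th)
   iff  ell * th' = - F1' sin th + F2' cos th. *)
Definition bicycle_sol (ell : R) (F1 F2 : R -> R) (th : R -> R) : Prop :=
  forall t, is_derive th t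
    ((- Derive F1 t * sin (th t) + Derive F2 t * cos (th t)) / ell).

Definition same_point (a b : R) : Prop :=
  exists k : Z, b = a + 2 * IZR k * PI.

(* th0 (a point of the circle) is a fixed point of the monodromy M_F over one
   period [0,T]: the solution starting at th0 returns to th0 mod 2*pi. *)
Definition monodromy_fixed (ell T : R) (F1 F2 : R -> R) (th0 : R) : Prop :=
  exists th : R -> R, bicycle_sol ell F1 F2 th /\ th 0 = th0 /\
    same_point th0 (th T).

(* M_F is parabolic: exactly one fixed point on the circle. *)
Definition monodromy_parabolic (ell T : R) (F1 F2 : R -> R) : Prop :=
  exists th0, monodromy_fixed ell T F1 F2 th0 /\
    forall th1, monodromy_fixed ell T F1 F2 th1 -> same_point th0 th1.

Definition monodromy_identity (ell T : R) (F1 F2 : R -> R) : Prop :=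
  forall th0, monodromy_fixed ell T F1 F2 th0.

Definition closed_rear_track (ell T : R) (F1 F2 th : R -> R) : Prop :=
  bicycle_sol ell F1 F2 th /\ same_point (th 0) (th T).

(* Signed length  int_0^T cos(alpha) dt,  alpha = arg F' - th, with t the arc
   length of F (so F' = (cos(arg F'), sin(arg F'))):
   cos(alpha) = F1' cos th + F2' sin th. *)
Definition signed_length (T : R) (F1 F2 th : R -> R) : R :=
  RInt (fun t => Derive F1 t * cos (th t) + Derive F2 t * sin (th t)) 0 T.

From Stdlib Require Import Reals Lra Lia ZArith.
From Coquelicot Require Import Coquelicot.
Open Scope R_scope.

(* Fix the closed rear track [a].  For any other solution [b], the function
   [v = cot ((b - a) / 2)] satisfies the linear equation
   [ell v' = cos(alpha) v + sin(alpha)], alpha the steering angle along [a].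
   Solving it by variation of constants, M_F becomes the affine map
   [v |-> exp (L / ell) (v + K)] in this chart, [a 0] being the point at
   infinity.  If [L <> 0] the affine map has a second, finite fixed point; if
   [L = 0] it is a translation, without fixed points unless it is the identity. *)

Ltac simpl_R_ops :=
  simpl; unfold minus, plus, opp, zero, scal, mult; simpl; unfold mult; simpl.

Lemma is_derive_eq (f : R -> R) (x l l' : R) :
  is_derive f x l -> l = l' -> is_derive f x l'.
Proof. now intros H <-. Qed.

Lemma is_derive_RInt_0 (f : R -> R) :
  (forall t, continuous f t) -> forall t, is_derive (fun x => RInt f 0 x) t (f t).
Proof.
intros Hf t; apply (is_derive_RInt f _ 0 t); [|apply Hf].
exists (mkposreal 1 Rlt_0_1); intros x _.
apply (RInt_correct f 0 x), ex_RInt_continuous; intros; apply Hf.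
Qed.

Lemma is_derive_0_const (f : R -> R) :
  (forall t, is_derive f t 0) -> forall t, f t = f 0.
Proof.
intros Hf t; destruct (Rtotal_order t 0) as [Ht|[->|Ht]]; auto.
- now apply (eq_is_derive f t 0).
- symmetry; now apply (eq_is_derive f 0 t).
Qed.

(* [N exp (- int h)] has derivative zero. *)
Lemma linear_ode_zero (h N : R -> R) :
  (forall t, continuous h t) -> (forall t, is_derive N t (h t * N t)) ->
  N 0 = 0 -> forall t, N t = 0.
Proof.
intros Hh HN HN0 t.
set (H := fun x => RInt h 0 x).
assert (Hconst : forall t, is_derive (fun x => N x * exp (- H x)) t 0).
{ intros x; eapply is_derive_eq.
  - apply (is_derive_mult N (fun x => exp (- H x))); [apply HN| |intros; apply Rmult_comm].
    apply (is_derive_comp exp (fun x => - H x)).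
    + apply is_derive_Reals, derivable_pt_lim_exp.
    + apply (is_derive_opp H), is_derive_RInt_0, Hh.
  - simpl_R_ops; ring. }
pose proof (is_derive_0_const _ Hconst t) as Ht; cbv beta in Ht.
rewrite HN0, Rmult_0_l in Ht.
pose proof (exp_pos (- H t)); nra.
Qed.

Definition cot (u : R) : R := cos u / sin u.

Lemma sin_kPI (k : Z) : sin (IZR k * PI) = 0.
Proof. apply sin_eq_0_1; eauto. Qed.

Lemma cos_2kPI (k : Z) : cos (2 * IZR k * PI) = 1.
Proof. rewrite Rmult_assoc, cos_2a_sin, sin_kPI; ring. Qed.

Lemma sin_add_2kPI (x : R) (k : Z) : sin (x + 2 * IZR k * PI) = sin x.
Proof.
rewrite sin_plus, cos_2kPI, Rmult_assoc, sin_2a, sin_kPI; ring.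
Qed.

Lemma cos_add_2kPI (x : R) (k : Z) : cos (x + 2 * IZR k * PI) = cos x.
Proof.
rewrite cos_plus, cos_2kPI, Rmult_assoc, sin_2a, sin_kPI; ring.
Qed.

Lemma cot_add_kPI (u : R) (k : Z) : sin u <> 0 -> cot (u + IZR k * PI) = cot u.
Proof.
intros Hu; unfold cot; rewrite sin_plus, cos_plus, sin_kPI.
assert (Hk : cos (IZR k * PI) <> 0).
{ intros Hc; pose proof (sin2_cos2 (IZR k * PI)) as H.
  rewrite sin_kPI, Hc in H; unfold Rsqr in H; lra. }
field; auto.
Qed.

Lemma cot_eq_of_cos_eq (u v : R) : cos u = v * sin u -> v = cot u.
Proof.
intros Huv; assert (Hu : sin u <> 0).
{ intros H0; pose proof (sin2_cos2 u) as H; rewrite Huv, H0 in H; unfold Rsqr in H; lra. }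
unfold cot; rewrite Huv; field; exact Hu.
Qed.

Lemma sqrt_1_add_sqr (x : R) : sqrt (1 + x²) * sqrt (1 + x²) = 1 + x ^ 2.
Proof. rewrite sqrt_sqrt; [unfold Rsqr; ring | pose proof (Rle_0_sqr x); lra]. Qed.

Lemma cos_2atan (x : R) : cos (2 * atan x) = (1 - x ^ 2) / (1 + x ^ 2).
Proof.
rewrite cos_2a, cos_atan, sin_atan, <- sqrt_1_add_sqr.
field; intros H0; pose proof (sqrt_1_add_sqr x) as H; rewrite H0 in H; nra.
Qed.

Lemma sin_2atan (x : R) : sin (2 * atan x) = 2 * x / (1 + x ^ 2).
Proof.
rewrite sin_2a, cos_atan, sin_atan, <- sqrt_1_add_sqr.
field; intros H0; pose proof (sqrt_1_add_sqr x) as H; rewrite H0 in H; nra.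
Qed.

Lemma same_point_sym (x y : R) : same_point x y -> same_point y x.
Proof. intros [k ->]; exists (- k)%Z; rewrite opp_IZR; ring. Qed.

Lemma same_point_trans (x y z : R) :
  same_point x y -> same_point y z -> same_point x z.
Proof. intros [k ->] [j ->]; exists (k + j)%Z; rewrite plus_IZR; ring. Qed.

Lemma same_point_iff_sin_half (x y : R) : same_point x y <-> sin ((y - x) / 2) = 0.
Proof.
split.
- intros [k ->]; replace ((x + 2 * IZR k * PI - x) / 2) with (IZR k * PI) by field.
  apply sin_kPI.
- intros [k Hk]%sin_eq_0_0; exists k; lra.
Qed.

Lemma same_point_dec (x y : R) : {same_point x y} + {~ same_point x y}.
Proof.
destruct (Req_EM_T (sin ((y - x) / 2)) 0) as [H|H]; rewrite <- same_point_iff_sin_half in H;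
  auto.
Qed.

(* [PI - 2 atan v] lies strictly between [0] and [2 PI]. *)
Lemma not_same_point_add_PI_sub_2atan (x v : R) : ~ same_point x (x + PI - 2 * atan v).
Proof.
intros [k Hk]; pose proof (atan_bound v); pose proof PI_RGT_0.
assert (Hk0 : 0 < IZR k) by nra.
assert (Hk1 : IZR k < 1) by nra.
apply lt_IZR in Hk0, Hk1; lia.
Qed.

Lemma same_point_add_PI_sub_2atan_cot (x y : R) :
  ~ same_point x y -> same_point (x + PI - 2 * atan (cot ((y - x) / 2))) y.
Proof.
rewrite same_point_iff_sin_half; set (u := (y - x) / 2); intros Hu.
assert (Hsqrt : sqrt (1 + (cot u)²) <> 0).
{ intros H0; pose proof (sqrt_1_add_sqr (cot u)) as H; rewrite H0 in H; nra. }
assert (Hj : sin (PI / 2 - atan (cot u) - u) = 0).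
{ rewrite sin_minus, sin_shift, cos_shift, cos_atan, sin_atan; unfold cot.
  field; auto. }
destruct (sin_eq_0_0 _ Hj) as [j Hj']; exists (- j)%Z; rewrite opp_IZR.
unfold u in *; lra.
Qed.

Lemma bicycle_sol_add_2kPI (ell : R) (F1 F2 th : R -> R) (k : Z) :
  bicycle_sol ell F1 F2 th -> bicycle_sol ell F1 F2 (fun t => th t + 2 * IZR k * PI).
Proof.
intros Hth t; rewrite sin_add_2kPI, cos_add_2kPI; eapply is_derive_eq.
- apply (is_derive_plus th (fun _ => 2 * IZR k * PI)); [apply Hth | apply is_derive_const].
- simpl_R_ops; ring.
Qed.

Lemma monodromy_fixed_same_point (ell T : R) (F1 F2 : R -> R) (x y : R) :
  same_point x y -> monodromy_fixed ell T F1 F2 x -> monodromy_fixed ell T F1 F2 y.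
Proof.
intros [k ->] (th & Hth & Hth0 & HthT).
exists (fun t => th t + 2 * IZR k * PI); split; [now apply bicycle_sol_add_2kPI|].
split; [now rewrite Hth0|].
destruct HthT as [j ->]; exists j; ring.
Qed.

Lemma monodromy_fixed_closed_rear_track (ell T : R) (F1 F2 th : R -> R) :
  closed_rear_track ell T F1 F2 th -> monodromy_fixed ell T F1 F2 (th 0).
Proof. intros [Hth Hclosed]; now exists th. Qed.

Section Cot_linearization.

Variables (ell : R) (F1 F2 a : R -> R).
Hypothesis ell_neq0 : ell <> 0.
Hypothesis a_sol : bicycle_sol ell F1 F2 a.

(* [steer_cos] is the integrand of [signed_length] along [a], and
   [a' = steer_sin / ell]. *)
Definition steer_cos (t : R) : R := Derive F1 t * cos (a t) + Derive F2 t * sin (a t).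
Definition steer_sin (t : R) : R := - Derive F1 t * sin (a t) + Derive F2 t * cos (a t).

(* For another solution [b], [v = cot ((b - a) / 2)] turns the Riccati-type
   bicycle equation into this linear equation. *)
Definition cot_ode (v : R -> R) : Prop :=
  forall t, is_derive v t ((steer_cos t * v t + steer_sin t) / ell).

Lemma bicycle_sol_cot_ode (v : R -> R) :
  cot_ode v -> bicycle_sol ell F1 F2 (fun t => a t + PI - 2 * atan (v t)).
Proof.
intros Hv t; eapply is_derive_eq.
- apply (is_derive_minus (fun t => a t + PI) (fun t => 2 * atan (v t))).
  + apply (is_derive_plus a (fun _ => PI)); [apply a_sol | apply is_derive_const].
  + apply (is_derive_scal (fun t => atan (v t))), (is_derive_comp atan v);
      [apply is_derive_Reals, derivable_pt_lim_atan | apply Hv].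
- simpl_R_ops; unfold steer_cos, steer_sin.
  replace (a t + PI - 2 * atan (v t)) with ((a t - 2 * atan (v t)) + PI) by ring.
  rewrite neg_sin, neg_cos, sin_minus, cos_minus, cos_2atan, sin_2atan.
  assert (1 + v t ^ 2 > 0) by nra.
  field; lra.
Qed.

Lemma is_derive_half_diff (b : R -> R) (t : R) :
  bicycle_sol ell F1 F2 b ->
  is_derive (fun t => (b t - a t) / 2) t
    (- sin ((b t - a t) / 2) *
       (steer_sin t * sin ((b t - a t) / 2) + steer_cos t * cos ((b t - a t) / 2)) / ell).
Proof.
intros Hb; eapply is_derive_eq.
- apply (is_derive_ext (fun t => (b t - a t) * / 2)); [reflexivity|].
  apply (is_derive_mult (fun t => b t - a t) (fun _ => / 2));
    [apply (is_derive_minus b a); [apply Hb | apply a_sol] | apply is_derive_const |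
     intros; apply Rmult_comm].
- simpl_R_ops; unfold steer_cos, steer_sin.
  set (u := (b t - a t) / 2); replace (b t) with (a t + 2 * u) by (unfold u; field).
  rewrite sin_plus, cos_plus, sin_2a, cos_2a_sin; field; auto.
Qed.

Lemma bicycle_sol_derivable (b : R -> R) :
  bicycle_sol ell F1 F2 b -> forall t, ex_derive b t.
Proof. intros Hb t; eexists; apply Hb. Qed.

Hypothesis F1'_derivable : forall t, ex_derive (Derive F1) t.
Hypothesis F2'_derivable : forall t, ex_derive (Derive F2) t.

(* [cos u - v sin u] with [u = (b - a) / 2] solves a linear homogeneous equation. *)
Lemma cot_ode_cos_half_diff (b v : R -> R) :
  bicycle_sol ell F1 F2 b -> cot_ode v ->
  cos ((b 0 - a 0) / 2) = v 0 * sin ((b 0 - a 0) / 2) ->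
  forall t, cos ((b t - a t) / 2) = v t * sin ((b t - a t) / 2).
Proof.
intros Hb Hv H0 t.
pose proof (bicycle_sol_derivable a a_sol) as Ha'.
pose proof (bicycle_sol_derivable b Hb) as Hb'.
set (h := fun t => sin ((b t - a t) / 2) *
  (steer_cos t * sin ((b t - a t) / 2) - steer_sin t * cos ((b t - a t) / 2)) / ell).
assert (Hh : forall t, continuous h t).
{ intros x; apply (ex_derive_continuous (K := R_AbsRing) (V := R_NormedModule)).
  unfold h, steer_cos, steer_sin; auto_derive.
  repeat split; first [apply Ha' | apply Hb' | apply F1'_derivable | apply F2'_derivable]. }
enough (HN : forall t, cos ((b t - a t) / 2) - v t * sin ((b t - a t) / 2) = 0)
  by (specialize (HN t); lra).
apply (linear_ode_zero h); [exact Hh | | lra].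
intros x; pose proof (is_derive_half_diff b x Hb) as Hu; eapply is_derive_eq.
- apply (is_derive_minus (fun t => cos ((b t - a t) / 2))
                         (fun t => v t * sin ((b t - a t) / 2))).
  + apply (is_derive_comp cos (fun t => (b t - a t) / 2));
      [apply is_derive_Reals, derivable_pt_lim_cos | apply Hu].
  + apply (is_derive_mult v (fun t => sin ((b t - a t) / 2)));
      [apply Hv | | intros; apply Rmult_comm].
    apply (is_derive_comp sin (fun t => (b t - a t) / 2));
      [apply is_derive_Reals, derivable_pt_lim_sin | apply Hu].
- simpl_R_ops; unfold h.
  set (P := cos ((b x - a x) / 2)); set (Q := sin ((b x - a x) / 2)).
  assert (HPQ : P ^ 2 + Q ^ 2 = 1).
  { unfold P, Q; rewrite <- (sin2_cos2 ((b x - a x) / 2)); unfold Rsqr; ring. }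
  apply Rminus_diag_uniq.
  transitivity (Q * (steer_sin x + steer_cos x * v x) / ell * (P ^ 2 + Q ^ 2 - 1));
    [field; auto | rewrite HPQ; ring].
Qed.

Lemma ex_derive_steer_cos (t : R) : ex_derive steer_cos t.
Proof.
pose proof (bicycle_sol_derivable a a_sol) as Ha'.
unfold steer_cos; auto_derive.
repeat split; first [apply Ha' | apply F1'_derivable | apply F2'_derivable].
Qed.

Lemma ex_derive_steer_sin (t : R) : ex_derive steer_sin t.
Proof.
pose proof (bicycle_sol_derivable a a_sol) as Ha'.
unfold steer_sin; auto_derive.
repeat split; first [apply Ha' | apply F1'_derivable | apply F2'_derivable].
Qed.

(* Variation of constants for [cot_ode]. *)
Definition cot_scale (t : R) : R := exp (RInt steer_cos 0 t / ell).
Definition cot_shift (t : R) : R := RInt (fun s => steer_sin s / (ell * cot_scale s)) 0 t.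
Definition cot_flow (v0 t : R) : R := cot_scale t * (v0 + cot_shift t).

Lemma is_derive_cot_scale (t : R) : is_derive cot_scale t (steer_cos t / ell * cot_scale t).
Proof.
eapply is_derive_eq.
- apply (is_derive_comp exp (fun t => RInt steer_cos 0 t / ell));
    [apply is_derive_Reals, derivable_pt_lim_exp|].
  apply (is_derive_mult (fun t => RInt steer_cos 0 t) (fun _ => / ell));
    [apply is_derive_RInt_0; intros x; apply (ex_derive_continuous (K := R_AbsRing) (V := R_NormedModule)), ex_derive_steer_cos | apply is_derive_const |
     intros; apply Rmult_comm].
- simpl_R_ops; unfold cot_scale, Rdiv; ring.
Qed.

Lemma is_derive_cot_shift (t : R) :
  is_derive cot_shift t (steer_sin t / (ell * cot_scale t)).
Proof.
apply (is_derive_RInt_0 (fun s => steer_sin s / (ell * cot_scale s))); intros x.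
apply (ex_derive_continuous (K := R_AbsRing) (V := R_NormedModule)).
apply (ex_derive_div steer_sin (fun t => ell * cot_scale t)); [apply ex_derive_steer_sin| |].
- apply (ex_derive_mult (fun _ => ell) cot_scale);
    [apply ex_derive_const | eexists; apply is_derive_cot_scale].
- apply Rmult_integral_contrapositive_currified; [exact ell_neq0|].
  apply Rgt_not_eq, exp_pos.
Qed.

Lemma cot_flow_0 (v0 : R) : cot_flow v0 0 = v0.
Proof.
unfold cot_flow, cot_scale, cot_shift; rewrite !RInt_point.
unfold zero; simpl; unfold Rdiv; rewrite Rmult_0_l, exp_0; ring.
Qed.

Lemma cot_ode_cot_flow (v0 : R) : cot_ode (cot_flow v0).
Proof.
intros t; eapply is_derive_eq.
- apply (is_derive_mult cot_scale (fun t => v0 + cot_shift t));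
    [apply is_derive_cot_scale | | intros; apply Rmult_comm].
  apply (is_derive_plus (fun _ => v0) cot_shift);
    [apply is_derive_const | apply is_derive_cot_shift].
- simpl_R_ops; unfold cot_flow.
  assert (cot_scale t <> 0) by apply Rgt_not_eq, exp_pos.
  field; auto.
Qed.

Variable T : R.
Hypothesis a_closed : same_point (a 0) (a T).

Lemma monodromy_fixed_cot_flow (v0 : R) :
  cot_flow v0 T = v0 -> monodromy_fixed ell T F1 F2 (a 0 + PI - 2 * atan v0).
Proof.
intros Hfix; exists (fun t => a t + PI - 2 * atan (cot_flow v0 t)).
split; [apply bicycle_sol_cot_ode, cot_ode_cot_flow|].
split; [now rewrite cot_flow_0|].
destruct a_closed as [k Hk]; exists k; cbv beta; rewrite Hfix, Hk; ring.
Qed.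

Lemma cot_flow_fixed_of_monodromy_fixed (x : R) :
  ~ same_point (a 0) x -> monodromy_fixed ell T F1 F2 x ->
  cot_flow (cot ((x - a 0) / 2)) T = cot ((x - a 0) / 2).
Proof.
rewrite same_point_iff_sin_half; intros Hx (b & Hb & Hb0 & [m HbT]).
destruct a_closed as [k Hk].
set (v0 := cot ((x - a 0) / 2)).
assert (HT := cot_ode_cos_half_diff b (cot_flow v0) Hb (cot_ode_cot_flow v0)).
rewrite cot_flow_0, Hb0 in HT.
specialize (HT ltac:(unfold v0, cot; field; exact Hx) T).
apply cot_eq_of_cos_eq in HT; rewrite HT.
replace ((b T - a T) / 2) with ((x - a 0) / 2 + IZR (m - k) * PI)
  by (rewrite HbT, Hk, minus_IZR; field).
now apply cot_add_kPI.
Qed.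

Lemma monodromy_fixed_iff_cot_flow_fixed (x : R) :
  ~ same_point (a 0) x ->
  monodromy_fixed ell T F1 F2 x <->
  cot_flow (cot ((x - a 0) / 2)) T = cot ((x - a 0) / 2).
Proof.
intros Hx; split; [now apply cot_flow_fixed_of_monodromy_fixed|].
intros Hfix; eapply monodromy_fixed_same_point;
  [apply same_point_add_PI_sub_2atan_cot, Hx | now apply monodromy_fixed_cot_flow].
Qed.

End Cot_linearization.

Theorem corollary3p2 (ell T : R) (F1 F2 th : R -> R) (L : R) :
  0 < ell -> 0 < T ->
  smooth F1 -> smooth F2 ->
  periodic F1 T -> periodic F2 T ->
  (forall t, (Derive F1 t) ^ 2 + (Derive F2 t) ^ 2 = 1) ->
  closed_rear_track ell T F1 F2 th ->
  L = signed_length T F1 F2 th ->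
  ~ monodromy_identity ell T F1 F2 ->
  (monodromy_parabolic ell T F1 F2 <-> L = 0).
Proof.
intros Hell _ HF1 HF2 _ _ _ Hrear HL Hnid.
pose proof (monodromy_fixed_closed_rear_track _ _ _ _ _ Hrear) as Hth0.
destruct Hrear as [Hth Hclosed].
assert (Hell0 : ell <> 0) by lra.
pose proof (fun t => HF1 1%nat t : ex_derive (Derive F1) t) as HF1'.
pose proof (fun t => HF2 1%nat t : ex_derive (Derive F2) t) as HF2'.
set (K := cot_shift ell F1 F2 th T).
assert (Hflow : forall v0, cot_flow ell F1 F2 th v0 T = exp (L / ell) * (v0 + K))
  by (intros; rewrite HL; reflexivity).
pose proof (monodromy_fixed_cot_flow ell F1 F2 th Hell0 Hth HF1' HF2' T Hclosed) as Hfixed.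
pose proof (monodromy_fixed_iff_cot_flow_fixed ell F1 F2 th Hell0 Hth HF1' HF2' T Hclosed)
  as Hiff.
split.
- intros (x & _ & Huniq); destruct (Req_dec L 0) as [|HL0]; [assumption | exfalso].
  assert (Hlam : exp (L / ell) <> 1).
  { rewrite <- exp_0; intros H%exp_inv; apply HL0.
    apply (Rmult_eq_reg_r (/ ell)); [lra | now apply Rinv_neq_0_compat]. }
  set (v := exp (L / ell) * K / (1 - exp (L / ell))).
  apply (not_same_point_add_PI_sub_2atan (th 0) v), (same_point_trans _ x).
  + now apply same_point_sym, Huniq.
  + apply Huniq, Hfixed; rewrite Hflow; unfold v; field; lra.
- intros ->; rewrite Rdiv_0_l, exp_0 in Hflow.
  assert (HK : K <> 0).
  { intros HK0; apply Hnid; intros x; destruct (same_point_dec (th 0) x) as [Hx|Hx].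
    - now apply (monodromy_fixed_same_point _ _ _ _ (th 0)).
    - apply Hiff; [exact Hx|]; rewrite Hflow, HK0; ring. }
  exists (th 0); split; [exact Hth0|].
  intros x Hx; destruct (same_point_dec (th 0) x) as [|Hns]; [assumption | exfalso].
  apply Hiff in Hx; [|exact Hns]; rewrite Hflow in Hx; lra.
Qed.
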